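(* Let $\zeta=1.2$ and $\beta(t)=\inf_{1<\alpha\le 3}\min\{\log t/\log\alpha,\ t\}\,t^{-\zeta/\alpha}$. For any policy, any arm $i\in[n]$ and any round $t\ge1$, with $\sigma_i^2=w^\star_i(1-w^\star_i)$, $$\mathbb P\Big(\bar w_{i,t}-w^\star_i>\sqrt{\tfrac{8\zeta\sigma_i^2\log t}{N^w_{i,t-1}}}+\tfrac{13.3\,\zeta\log t}{N^w_{i,t-1}}\Big)\le 2\beta(t).$$
   Context: Sequential search-and-stop setting: $\mathcal G$ is a DAG on $[n]$; a search is a tuple of distinct vertices in which every in-neighbor of each entry appears earlier. Hider vectors $W_t\in\{0,1\}^n$, $t=1,2,\dots$, are i.i.d., one-hot, with $\mathbb P(W_{i,t}=1)=w^\star_i$, $\sum_iw^\star_i=1$. A policy selects at the start of round $t$ a search $s_t$ as a (possibly randomized) function of past observations, and observes $W_{i,t}$ for all $i\in s_t$. Define $N^w_{i,t-1}=\sum_{u=1}^{t-1}\mathbf 1\{i\in s_u\}$, $\hat w_{i,t-1}=\sum_{u=1}^{t-1}\mathbf 1\{i\in s_u\}W_{i,u}/N^w_{i,t-1}$ (with $0/0=0$), and $\bar w_{i,t}=\min\Big\{\hat w_{i,t-1}+\sqrt{\tfrac{2\zeta\hat w_{i,t-1}(1-\hat w_{i,t-1})\log t}{N^w_{i,t-1}}}+\tfrac{3\zeta\log t}{N^w_{i,t-1}},\,1\Big\}$, with the convention $x/0=+\infty$ for $x\ge0$ (so $\bar w_{i,t}=1$ when $N^w_{i,t-1}=0$;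 in the event of the claim, a zero counter makes the threshold $+\infty$). *)

From Stdlib Require Import Reals Lra Lia List Relations ClassicalEpsilon.
Import ListNotations.
Open Scope R_scope.

Definition Rsum (l : list R) : R := fold_right Rplus 0 l.

(* ---------- the DAG G on [n] = {0,...,n-1} ----------
   E j i means "j is an in-neighbour of i" (edge j -> i). *)
Definition is_dag (n : nat) (E : nat -> nat -> Prop) : Prop :=
  (forall j i, E j i -> (j < n)%nat /\ (i < n)%nat) /\
  (forall i, ~ clos_trans nat E i i).

Definition is_search (n : nat) (E : nat -> nat -> Prop) (s : list nat) : Prop :=
  NoDup s /\ (forall i, In i s -> (i < n)%nat) /\
  (forall k j, (k < length s)%nat -> E j (nth k s 0%nat) -> In j (firstn k s)).

(* ---------- trajectories ----------
   A round is recorded as (s_u, h_u) where h_u is the (unique) index with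
   W_{h_u,u} = 1 (hider vectors are one-hot). *)
Definition traj := list (list nat * nat).

Definition memb (i : nat) (s : list nat) : bool := existsb (Nat.eqb i) s.

Definition observe (tr : traj) : list (list nat * list bool) :=
  map (fun p => (fst p, map (fun i => Nat.eqb i (snd p)) (fst p))) tr.

(* A (possibly randomized) policy: given the observed history, a finitely
   supported distribution over searches, given as (probability, search) list. *)
Definition policy := list (list nat * list bool) -> list (R * list nat).

Definition valid_policy (n : nat) (E : nat -> nat -> Prop) (pol : policy) : Prop :=
  forall hist,
    (forall p s, In (p, s) (pol hist) -> 0 <= p /\ is_search n E s) /\
    Rsum (map fst (pol hist)) = 1.

Definition is_distr (n : nat) (w : nat -> R) : Prop :=
  (forall i, (i < n)%nat -> 0 <= w i) /\ Rsum (map w (seq 0 n)) = 1.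

Fixpoint expect (n : nat) (pol : policy) (w : nat -> R) (k : nat)
    (tr : traj) (F : traj -> R) : R :=
  match k with
  | O => F tr
  | S k' =>
      Rsum (map (fun ps =>
        Rsum (map (fun h => fst ps * w h * expect n pol w k' (tr ++ [(snd ps, h)]) F)
                  (seq 0 n)))
        (pol (observe tr)))
  end.

(* N^w_{i,t-1} computed from the trajectory of the first t-1 rounds *)
Definition Nw (i : nat) (tr : traj) : nat :=
  length (filter (fun p => memb i (fst p)) tr).

Definition hits (i : nat) (tr : traj) : nat :=
  length (filter (fun p => andb (memb i (fst p)) (Nat.eqb (snd p) i)) tr).

Definition hat_w (i : nat) (tr : traj) : R :=
  if Nat.eqb (Nw i tr) 0 then 0 else INR (hits i tr) / INR (Nw i tr).

Definition zeta : R := 6 / 5.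

Definition bar_w (i : nat) (t : nat) (tr : traj) : R :=
  if Nat.eqb (Nw i tr) 0 then 1 else
  let N := INR (Nw i tr) in
  let h := hat_w i tr in
  Rmin (h + sqrt (2 * zeta * h * (1 - h) * ln (INR t) / N)
          + 3 * zeta * ln (INR t) / N) 1.

(* Indicator of the event
   bar_w_{i,t} - w_i > sqrt(8 zeta sigma^2 log t / N) + 13.3 zeta log t / N,
   with threshold +infinity (event false) when N = 0. *)
Definition bad_event (w : nat -> R) (i t : nat) (tr : traj) : R :=
  if Nat.eqb (Nw i tr) 0 then 0 else
  let N := INR (Nw i tr) in
  let sigma2 := w i * (1 - w i) in
  if Rlt_dec (sqrt (8 * zeta * sigma2 * ln (INR t) / N)
              + (133 / 10) * zeta * ln (INR t) / N)
             (bar_w i t tr - w i)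
  then 1 else 0.

Definition beta_set (t : nat) (x : R) : Prop :=
  exists a, 1 < a <= 3 /\
    x = Rmin (ln (INR t) / ln a) (INR t) * Rpower (INR t) (- zeta / a).

Definition is_glb (S : R -> Prop) (b : R) : Prop :=
  (forall x, S x -> b <= x) /\ (forall c, (forall x, S x -> c <= x) -> c <= b).

Definition beta (t : nat) : R :=
  epsilon (inhabits 0) (fun b => is_glb (beta_set t) b).

(* Write S and N for the numbers of hits and visits of arm i, sigma^2 = w_i (1 - w_i) and
   a = zeta log t. For every lam in (0, 1] the process exp (lam (S - w_i N) - sigma^2 psi(lam) N),
   psi(lam) = lam^2/2 + 3 lam^3/2, is a supermartingale under any policy, since one Bernoulli(w_i)
   observation has log-MGF at most sigma^2 psi(lam). On the bad event the deviation S - w_i N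
   exceeds sqrt (2 a sigma^2 N) + 5a, so on a geometric grid lam_j = (1 - d)^j, j <= J, some
   lam_j makes the exponent at least a (1 - d^2); summing the J + 1 supermartingales bounds the
   probability by (J + 1) exp (-a (1 - d^2)), with J about log t / (2d). The choice
   d = sqrt (1 - 1/alpha) gives 2 (log t / log alpha) t^(-zeta/alpha) and d = 1/sqrt a gives
   2 t t^(-zeta/alpha). For t < 27 the bad event is empty, as it forces N > 13.3 a >= t - 1. *)

From Stdlib Require Import Reals Lra Lia Psatz List Relations ClassicalEpsilon ZArith.
From Coquelicot Require Import Coquelicot.
Import ListNotations.
Open Scope R_scope.

Section FiniteSums.
Context {A : Type}.
Implicit Types (f g : A -> R) (l : list A).

Lemma Rsum_map_le f g l :
  (forall x, In x l -> f x <= g x) -> Rsum (map f l) <= Rsum (map g l).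
Proof. induction l as [|x l IH]; simpl; intros H; [lra|]. apply Rplus_le_compat; auto. Qed.

Lemma Rsum_map_ext f g l :
  (forall x, In x l -> f x = g x) -> Rsum (map f l) = Rsum (map g l).
Proof. induction l as [|x l IH]; simpl; intros H; auto. rewrite H, IH; auto. Qed.

Lemma Rsum_map_scal c f l : Rsum (map (fun x => c * f x) l) = c * Rsum (map f l).
Proof. induction l as [|x l IH]; simpl; [ring|]. rewrite IH; ring. Qed.

Lemma Rsum_map_plus f g l :
  Rsum (map (fun x => f x + g x) l) = Rsum (map f l) + Rsum (map g l).
Proof. induction l as [|x l IH]; simpl; [ring|]. rewrite IH; ring. Qed.

Lemma Rsum_map_const c l : Rsum (map (fun _ => c) l) = INR (length l) * c.
Proof.
  induction l as [|x l IH]; simpl length; [simpl; ring|].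
  rewrite S_INR; simpl; rewrite IH; ring.
Qed.

Lemma Rsum_map_nonneg f l : (forall x, In x l -> 0 <= f x) -> 0 <= Rsum (map f l).
Proof.
  induction l as [|x l IH]; simpl; intros H; [lra|].
  pose proof (H x (or_introl eq_refl)). pose proof (IH (fun y Hy => H y (or_intror Hy))). lra.
Qed.

Lemma Rsum_map_term_le f l y :
  (forall x, In x l -> 0 <= f x) -> In y l -> f y <= Rsum (map f l).
Proof.
  induction l as [|x l IH]; simpl; intros H Hy; [tauto|].
  pose proof (H x (or_introl eq_refl)).
  pose proof (Rsum_map_nonneg f l (fun z Hz => H z (or_intror Hz))).
  destruct Hy as [<-|Hy]; [lra|].
  pose proof (IH (fun z Hz => H z (or_intror Hz)) Hy). lra.
Qed.

End FiniteSums.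

Lemma Rsum_map_swap {A B} (g : A -> B -> R) la lb :
  Rsum (map (fun a => Rsum (map (fun b => g a b) lb)) la) =
  Rsum (map (fun b => Rsum (map (fun a => g a b) la)) lb).
Proof.
  induction la as [|a la IH]; simpl.
  - induction lb as [|b lb IHb]; simpl; auto. rewrite <- IHb; ring.
  - rewrite IH, <- Rsum_map_plus. reflexivity.
Qed.

Lemma Rsum_map_indicator_notin (w : nat -> R) i u v l : ~ In i l ->
  Rsum (map (fun h => w h * (if Nat.eqb h i then u else v)) l) = v * Rsum (map w l).
Proof.
  induction l as [|h l IH]; simpl; intros Hi; [ring|].
  destruct (Nat.eqb_spec h i); [subst; tauto|].
  rewrite IH by tauto. ring.
Qed.

Lemma Rsum_map_indicator (w : nat -> R) i u v l : NoDup l -> In i l ->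
  Rsum (map (fun h => w h * (if Nat.eqb h i then u else v)) l)
  = v * Rsum (map w l) + (u - v) * w i.
Proof.
  induction l as [|h l IH]; simpl; intros Hl Hi; [tauto|].
  inversion Hl; subst.
  destruct (Nat.eqb_spec h i) as [->|Hne].
  - rewrite Rsum_map_indicator_notin by auto. ring.
  - destruct Hi as [Hi|Hi]; [congruence|]. rewrite IH by auto. ring.
Qed.

Lemma distr_le_1 n w i : is_distr n w -> (i < n)%nat -> 0 <= w i <= 1.
Proof.
  intros [Hw0 Hw1] Hi. split; [auto|]. rewrite <- Hw1.
  apply (Rsum_map_term_le w); [|apply in_seq; lia].
  intros x Hx. apply in_seq in Hx. apply Hw0; lia.
Qed.

Lemma Derive_n_exp k x : Derive_n exp k x = exp x.
Proof. apply is_derive_n_unique, is_derive_n_exp. Qed.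

Lemma ex_derive_n_exp k x : ex_derive_n exp k x.
Proof. destruct k; [exact I|]. exists (exp x). apply (is_derive_n_exp (S k)). Qed.

Lemma exp_le_cubic y : 0 <= y <= 1 -> exp y <= 1 + y + y^2/2 + y^3/2.
Proof.
  intros Hy. destruct (Req_dec y 0) as [->|Hy0]; [rewrite exp_0; lra|].
  destruct (Taylor_Lagrange exp 2 0 y ltac:(lra)) as [z [Hz ->]].
  { intros; apply ex_derive_n_exp. }
  change (sum_f_R0 ?f 2) with (f 0%nat + f 1%nat + f 2%nat).
  rewrite !Derive_n_exp, exp_0, !Rminus_0_r.
  assert (exp z <= 3).
  { apply Rle_trans with (exp 1); [apply Rlt_le, exp_increasing; lra | apply exp_le_3]. }
  assert (0 <= y^3) by (apply pow_le; lra).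
  simpl. nra.
Qed.

Lemma exp_opp_le_quadratic y : 0 <= y -> exp (- y) <= 1 - y + y^2/2.
Proof.
  intros Hy. pose proof (exp_ge_taylor y 3 Hy) as Hexp. simpl in Hexp.
  pose proof (exp_pos y). rewrite exp_Ropp.
  apply Rmult_le_reg_l with (exp y); auto.
  rewrite Rinv_r by lra.
  assert (0 <= 1 - y + y^2/2) by nra.
  apply Rle_trans with ((1 + y + y^2/2 + y^3/6) * (1 - y + y^2/2)).
  - nra.
  - apply Rmult_le_compat_r; lra.
Qed.

Definition cgf_bound (lam : R) : R := lam^2/2 + 3/2 * lam^3.

Lemma bernoulli_mgf_le p lam : 0 <= p <= 1 -> 0 < lam <= 1 ->
  (1 - p + p * exp lam) * exp (- (lam * p)) <= exp (p * (1 - p) * cgf_bound lam).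
Proof.
  intros Hp Hl.
  assert (Eexp : exp lam * exp (- (lam * p)) = exp (lam * (1 - p))).
  { rewrite <- exp_plus; f_equal; ring. }
  pose proof (exp_opp_le_quadratic (lam * p) ltac:(nra)) as Hneg.
  pose proof (exp_le_cubic (lam * (1 - p)) ltac:(split; nra)) as Hpos.
  apply Rle_trans with (1 + p * (1 - p) * cgf_bound lam); [|apply exp_ineq1_le].
  replace ((1 - p + p * exp lam) * exp (- (lam * p))) with
    ((1 - p) * exp (- (lam * p)) + p * (exp lam * exp (- (lam * p)))) by ring.
  rewrite Eexp. unfold cgf_bound.
  apply Rle_trans with ((1 - p) * (1 - lam * p + (lam * p) ^ 2 / 2) +
     p * (1 + lam * (1 - p) + (lam * (1 - p)) ^ 2 / 2 + (lam * (1 - p)) ^ 3 / 2)).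
  - apply Rplus_le_compat; apply Rmult_le_compat_l; lra.
  - assert (0 <= p * (1 - p)) by nra.
    assert (0 <= lam^3) by (apply pow_le; lra).
    assert (0 <= (1 - p)^2 <= 1) by (split; nra).
    assert (p * (1 - p) * lam^3 * (1 - p)^2 <= p * (1 - p) * lam^3 * 1).
    { apply Rmult_le_compat_l; [apply Rmult_le_pos|]; lra. }
    simpl in *. nra.
Qed.

Lemma Nw_snoc i tr s h : Nw i (tr ++ [(s, h)]) = (Nw i tr + if memb i s then 1 else 0)%nat.
Proof. unfold Nw. rewrite filter_app, length_app. simpl. destruct (memb i s); simpl; lia. Qed.

Lemma hits_snoc i tr s h : hits i (tr ++ [(s, h)]) =
  (hits i tr + if andb (memb i s) (Nat.eqb h i) then 1 else 0)%nat.
Proof.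
  unfold hits. rewrite filter_app, length_app. simpl.
  destruct (andb (memb i s) (Nat.eqb h i)); simpl; lia.
Qed.

Lemma hits_le_Nw i tr : (hits i tr <= Nw i tr)%nat.
Proof.
  unfold hits, Nw. induction tr as [|[s h] tr IH]; simpl; auto.
  destruct (memb i s); simpl; [destruct (Nat.eqb h i); simpl|]; lia.
Qed.

Lemma Nw_le_length i tr : (Nw i tr <= length tr)%nat.
Proof. apply filter_length_le. Qed.

Section Expectation.
Variables (n : nat) (E : nat -> nat -> Prop) (pol : policy) (w : nat -> R).
Hypothesis pol_valid : valid_policy n E pol.
Hypothesis w_nonneg : forall h, (h < n)%nat -> 0 <= w h.

Lemma expect_le_compat (F G : traj -> R) k tr :
  (forall tr', length tr' = (length tr + k)%nat -> F tr' <= G tr') ->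
  expect n pol w k tr F <= expect n pol w k tr G.
Proof.
  revert tr; induction k as [|k IH]; intros tr HFG; simpl.
  - apply HFG. lia.
  - apply Rsum_map_le. intros [p s] Hin. simpl.
    pose proof (proj1 (proj1 (pol_valid (observe tr)) p s Hin)).
    apply Rsum_map_le. intros h Hh. apply in_seq in Hh.
    pose proof (w_nonneg h ltac:(lia)).
    apply Rmult_le_compat_l; [nra|]. apply IH.
    intros tr' Hl. apply HFG. rewrite Hl, length_app. simpl. lia.
Qed.

Lemma expect_le_of_supermartingale (F : traj -> R) :
  (forall tr p s, In (p, s) (pol (observe tr)) ->
     Rsum (map (fun h => w h * F (tr ++ [(s, h)])) (seq 0 n)) <= F tr) ->
  forall k tr, expect n pol w k tr F <= F tr.
Proof.
  intros Hsuper k. induction k as [|k IH]; intros tr; simpl; [lra|].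
  destruct (pol_valid (observe tr)) as [Hsupp Hsum].
  apply Rle_trans with (Rsum (map (fun ps => F tr * fst ps) (pol (observe tr)))).
  - apply Rsum_map_le. intros [p s] Hin. simpl.
    pose proof (proj1 (Hsupp p s Hin)).
    apply Rle_trans with (Rsum (map (fun h => p * (w h * F (tr ++ [(s, h)]))) (seq 0 n))).
    + apply Rsum_map_le. intros h Hh. apply in_seq in Hh.
      pose proof (w_nonneg h ltac:(lia)).
      rewrite <- Rmult_assoc. apply Rmult_le_compat_l; [nra|]. apply IH.
    + rewrite Rsum_map_scal, (Rmult_comm (F tr)).
      apply Rmult_le_compat_l; [lra|]. exact (Hsuper tr p s Hin).
  - rewrite Rsum_map_scal, Hsum. lra.
Qed.

End Expectation.

Definition exp_deviation (w : nat -> R) (i : nat) (lam c : R) (tr : traj) : R :=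
  exp (lam * (INR (hits i tr) - w i * INR (Nw i tr)) - c * INR (Nw i tr)).

Lemma exp_deviation_nil w i lam c : exp_deviation w i lam c [] = 1.
Proof. unfold exp_deviation, hits, Nw; simpl. rewrite <- exp_0. f_equal. ring. Qed.

Lemma exp_deviation_supermartingale n w i lam c tr s :
  is_distr n w -> (i < n)%nat ->
  (1 - w i + w i * exp lam) * exp (- (lam * w i)) <= exp c ->
  Rsum (map (fun h => w h * exp_deviation w i lam c (tr ++ [(s, h)])) (seq 0 n))
  <= exp_deviation w i lam c tr.
Proof.
  intros [_ Hw1] Hi Hc.
  set (X := exp_deviation w i lam c tr).
  assert (HX : 0 < X) by apply exp_pos.
  destruct (memb i s) eqn:Hs.
  - set (g := exp (- (lam * w i)) * exp (- c)).
    rewrite (Rsum_map_ext _ (fun h => w h * (if Nat.eqb h i then X * (exp lam * g) else X * g))).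
    2:{ intros h _. unfold X, g, exp_deviation.
        rewrite Nw_snoc, hits_snoc, Hs. simpl.
        destruct (Nat.eqb h i); rewrite !plus_INR; simpl; rewrite <- !exp_plus;
          f_equal; f_equal; ring. }
    rewrite Rsum_map_indicator, Hw1 by (apply seq_NoDup || (apply in_seq; lia)).
    assert (Hg : (1 - w i + w i * exp lam) * g <= 1).
    { unfold g. rewrite <- Rmult_assoc.
      apply Rmult_le_reg_r with (exp c); [apply exp_pos|].
      rewrite Rmult_assoc, <- exp_plus, Rplus_opp_l, exp_0. lra. }
    replace (X * g * 1 + (X * (exp lam * g) - X * g) * w i)
      with (X * ((1 - w i + w i * exp lam) * g)) by ring.
    nra.
  - rewrite (Rsum_map_ext _ (fun h => X * w h)).
    2:{ intros h _. unfold X, exp_deviation.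
        rewrite Nw_snoc, hits_snoc, Hs, !Nat.add_0_r. simpl. ring. }
    rewrite Rsum_map_scal, Hw1. lra.
Qed.

Lemma sqrt_le_of_le_square x y : 0 <= y -> x <= y * y -> sqrt x <= y.
Proof. intros Hy Hx. rewrite <- (sqrt_square y Hy). apply sqrt_le_1_alt, Hx. Qed.

(* With [D = h - p] and [v = sqrt (2 e p (1 - p))], the empirical variance is
   [h (1 - h) = p (1 - p) + D (1 - 2p) - D^2], so the index cannot overshoot [p] by
   [2v + 13.3 e] unless [D] itself exceeds [v + 5e]. *)
Lemma ucb_excess_gt h p e : 0 <= h <= 1 -> 0 <= p <= 1 -> 0 <= e ->
  2 * sqrt (2 * e * (p * (1 - p))) + 133/10 * e
    < Rmin (h + sqrt (2 * e * (h * (1 - h))) + 3 * e) 1 - p ->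
  h - p > sqrt (2 * e * (p * (1 - p))) + 5 * e.
Proof.
  intros Hh Hp He Hexcess.
  assert (Hvar0 : 0 <= 2 * e * (p * (1 - p))) by (apply Rmult_le_pos; nra).
  pose proof (sqrt_pos (2 * e * (p * (1 - p)))) as Hv.
  pose proof (sqrt_sqrt _ Hvar0) as Hv2.
  set (v := sqrt (2 * e * (p * (1 - p)))) in *.
  set (K := sqrt (2 * e * (h * (1 - h)))) in *.
  assert (Hvar : h * (1 - h) = p * (1 - p) + (h - p) * (1 - 2 * p) - (h - p) * (h - p)) by ring.
  pose proof (Rmin_l (h + K + 3 * e) 1).
  apply Rnot_le_gt. intros HD.
  destruct (Rle_lt_dec 0 (h - p)) as [HD0|HD0].
  - assert (K <= v + 42/10 * e).
    { apply sqrt_le_of_le_square; [lra|]. rewrite Hvar.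
      assert ((h - p) * (1 - 2 * p) - (h - p) * (h - p) <= v + 5 * e) by nra.
      assert (2 * e * ((h - p) * (1 - 2 * p) - (h - p) * (h - p)) <= 2 * e * (v + 5 * e))
        by (apply Rmult_le_compat_l; lra).
      nra. }
    lra.
  - assert (K <= v - (h - p) + e / 2).
    { apply sqrt_le_of_le_square; [lra|]. rewrite Hvar.
      assert (0 <= (p - h) * (2 - 2 * p)) by (apply Rmult_le_pos; lra).
      assert ((h - p) * (1 - 2 * p) <= - (h - p)) by lra.
      assert (2 * e * ((h - p) * (1 - 2 * p)) <= 2 * e * (- (h - p)))
        by (apply Rmult_le_compat_l; lra).
      pose proof (Rle_0_sqr (h - p + e / 2)). unfold Rsqr in *.
      assert (0 <= e * ((h - p) * (h - p))) by (apply Rmult_le_pos; nra).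
      nra. }
    lra.
Qed.

Lemma bad_event_deviation w i t tr : 0 <= w i <= 1 -> (1 <= t)%nat ->
  bad_event w i t tr <> 0 ->
  INR (hits i tr) - w i * INR (Nw i tr)
    > sqrt (2 * (zeta * ln (INR t)) * (w i * (1 - w i) * INR (Nw i tr)))
      + 5 * (zeta * ln (INR t))
  /\ 133/10 * (zeta * ln (INR t)) < INR (Nw i tr).
Proof.
  intros Hw Ht Hbad. unfold bad_event, bar_w, hat_w in Hbad.
  destruct (Nat.eqb_spec (Nw i tr) 0) as [|HN0]; [lra|].
  destruct (Rlt_dec _ _) as [Hlt|]; [clear Hbad|lra].
  set (N := INR (Nw i tr)) in *. set (S := INR (hits i tr)) in *.
  set (L := ln (INR t)) in *. set (p := w i) in *.
  assert (HN : 0 < N) by (apply lt_0_INR; lia).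
  assert (HSN : 0 <= S <= N) by (split; [apply pos_INR | apply le_INR, hits_le_Nw]).
  assert (HL : 0 <= L) by (rewrite <- ln_1; apply ln_le, (le_INR 1); [lra | lia]).
  set (e := zeta * L / N).
  assert (He : 0 <= e)
    by (unfold e, zeta; apply Rmult_le_pos; [nra | apply Rlt_le, Rinv_0_lt_compat, HN]).
  assert (Hh : 0 <= S / N <= 1).
  { split; [apply Rmult_le_pos; [lra | apply Rlt_le, Rinv_0_lt_compat, HN]|].
    apply Rmult_le_reg_r with N; [exact HN|]. field_simplify; lra. }
  assert (Hsig0 : 0 <= 2 * e * (p * (1 - p))) by (apply Rmult_le_pos; nra).
  assert (Hsigma : sqrt (8 * zeta * (p * (1 - p)) * L / N) = 2 * sqrt (2 * e * (p * (1 - p)))).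
  { replace (8 * zeta * (p * (1 - p)) * L / N) with ((2 * 2) * (2 * e * (p * (1 - p))))
      by (unfold e; field; lra).
    rewrite sqrt_mult, sqrt_square by lra. reflexivity. }
  replace (2 * zeta * (S / N) * (1 - S / N) * L / N) with (2 * e * (S / N * (1 - S / N)))
    in Hlt by (unfold e; field; lra).
  replace (133 / 10 * zeta * L / N) with (133/10 * e) in Hlt by (unfold e; field; lra).
  replace (3 * zeta * L / N) with (3 * e) in Hlt by (unfold e; field; lra).
  rewrite Hsigma in Hlt.
  pose proof (ucb_excess_gt (S / N) p e Hh Hw He Hlt) as Hdev.
  pose proof (Rmin_r (S / N + sqrt (2 * e * (S / N * (1 - S / N))) + 3 * e) 1).
  pose proof (sqrt_pos (2 * e * (p * (1 - p)))).
  assert (Ha : zeta * L = e * N) by (unfold e; field; lra).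
  rewrite Ha. split.
  - replace (2 * (e * N) * (p * (1 - p) * N)) with ((N * N) * (2 * e * (p * (1 - p)))) by ring.
    rewrite sqrt_mult, sqrt_square by nra.
    replace (S - p * N) with (N * (S / N - p)) by (field; lra).
    nra.
  - nra.
Qed.

(* [lam = 2a / sqrt (2aV)] maximises [lam sqrt (2aV) - V lam^2 / 2], with value [a]; a [lam]
   within a factor [1 - d] below it loses at most [a d^2], and the cubic part of [cgf_bound]
   is paid for by the margin [5a]. *)
Lemma exponent_ge_near_optimum a V T lam d : 0 < a -> 0 <= V -> 0 < d < 1 -> 0 < lam ->
  T > sqrt (2 * a * V) + 5 * a ->
  (sqrt (2 * a * V) <= 2 * a /\ lam = 1) \/
  ((1 - d) * (2 * a) <= lam * sqrt (2 * a * V) <= 2 * a) ->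
  lam * T - V * cgf_bound lam >= a * (1 - d^2).
Proof.
  intros Ha HV Hd Hl HT Hlam.
  pose proof (sqrt_pos (2 * a * V)) as HR.
  pose proof (sqrt_sqrt (2 * a * V) ltac:(nra)) as HR2.
  set (R := sqrt (2 * a * V)) in *.
  unfold cgf_bound. destruct Hlam as [[HRa ->]|[Hlo Hhi]].
  - assert (V <= 2 * a) by nra. nra.
  - set (u := lam * R) in *.
    assert (Hu : u * u = 2 * a * (V * lam ^ 2)) by (unfold u; simpl; nra).
    assert (Hcubic : V * lam^3 <= 2 * lam * a).
    { apply Rmult_le_reg_r with (2 * a); [lra|].
      replace (V * lam^3 * (2 * a)) with (lam * (u * u)) by (rewrite Hu; simpl; ring).
      assert (u * u <= 2 * a * (2 * a)) by (apply Rmult_le_compat; nra).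
      nra. }
    assert (HlamT : lam * T >= u + 5 * a * lam) by (unfold u; nra).
    assert (Hquad : V * (lam ^ 2 / 2) = u * u / (4 * a)) by (rewrite Hu; field; lra).
    assert (u - u * u / (4 * a) >= a * (1 - d^2)).
    { apply Rle_ge, Rmult_le_reg_l with (4 * a); [lra|].
      replace (4 * a * (u - u * u / (4 * a))) with (4 * a * u - u * u) by (field; lra).
      assert ((2 * a - u) * (2 * a - u) <= (2 * a * d) * (2 * a * d)) by nra.
      simpl. nra. }
    nra.
Qed.

Lemma exists_pow_between q y J : 0 < q < 1 -> q ^ J <= y <= 1 ->
  exists j, (j <= J)%nat /\ q ^ j <= y /\ q * y <= q ^ j.
Proof.
  intros Hq. induction J as [|J IH]; intros Hy.
  - exists 0%nat. simpl in *. split; [lia | split; nra].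
  - destruct (Rle_lt_dec (q ^ J) y) as [HJ|HJ].
    + destruct (IH (conj HJ (proj2 Hy))) as [j Hj]. exists j. split; [lia | tauto].
    + exists (S J). simpl in *. split; [lia | split; nra].
Qed.

Lemma exists_grid_exponent_ge a V T d J : 0 < a -> 0 <= V -> 0 < d < 1 ->
  T > sqrt (2 * a * V) + 5 * a ->
  (1 - d) ^ J * (1 - d) ^ J * V <= 2 * a ->
  exists j, (j <= J)%nat /\
    (1 - d) ^ j * T - V * cgf_bound ((1 - d) ^ j) >= a * (1 - d^2).
Proof.
  intros Ha HV Hd HT HJ.
  pose proof (sqrt_pos (2 * a * V)) as HR.
  pose proof (sqrt_sqrt (2 * a * V) ltac:(nra)) as HR2.
  set (R := sqrt (2 * a * V)) in *.
  destruct (Rle_lt_dec R (2 * a)) as [HRa|HRa].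
  - exists 0%nat. split; [lia|]. apply exponent_ge_near_optimum; auto; simpl; lra.
  - set (q := 1 - d) in *.
    assert (Hq : 0 < q < 1) by (unfold q; lra).
    assert (HqJ : 0 < q ^ J) by (apply pow_lt; lra).
    assert (HqJR : q ^ J * R <= 2 * a).
    { apply Rsqr_incr_0_var; [|lra]. unfold Rsqr.
      replace (q ^ J * R * (q ^ J * R)) with (q ^ J * q ^ J * (R * R)) by ring.
      rewrite HR2. nra. }
    set (y := 2 * a / R).
    assert (HyR : y * R = 2 * a) by (unfold y; field; lra).
    assert (Hy : q ^ J <= y <= 1) by (split; apply Rmult_le_reg_r with R; lra).
    destruct (exists_pow_between q y J Hq Hy) as [j [Hj [Hjy Hyj]]].
    exists j. split; [exact Hj|]. apply exponent_ge_near_optimum; auto.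
    + apply pow_lt; lra.
    + right. split.
      * apply Rle_trans with (q * y * R); [rewrite Rmult_assoc, HyR; right; reflexivity|].
        apply Rmult_le_compat_r; [apply sqrt_pos | exact Hyj].
      * apply Rle_trans with (y * R); [|lra]. apply Rmult_le_compat_r; [apply sqrt_pos | exact Hjy].
Qed.

Lemma bad_event_le_1 w i t tr : bad_event w i t tr <= 1.
Proof.
  unfold bad_event. destruct (Nat.eqb (Nw i tr) 0); [lra|].
  destruct (Rlt_dec _ _); lra.
Qed.

Section GridUnionBound.
Variables (n : nat) (E : nat -> nat -> Prop) (pol : policy) (w : nat -> R) (i t : nat).
Hypothesis pol_valid : valid_policy n E pol.
Hypothesis w_distr : is_distr n w.
Hypothesis i_lt_n : (i < n)%nat.
Hypothesis t_ge_1 : (1 <= t)%nat.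
Hypothesis scale_ge : 1/8 <= zeta * ln (INR t).
Variables (d : R) (J : nat).
Hypothesis d_range : 0 < d < 1.
Hypothesis grid_deep : (1 - d) ^ J * (1 - d) ^ J * INR t <= 1.

Let a := zeta * ln (INR t).
Let sigma2 := w i * (1 - w i).
Let grid_term (j : nat) (tr : traj) : R :=
  exp (- (a * (1 - d^2))) *
  exp_deviation w i ((1 - d) ^ j) (sigma2 * cgf_bound ((1 - d) ^ j)) tr.
Let grid_sum (tr : traj) : R := Rsum (map (fun j => grid_term j tr) (seq 0 (S J))).

Lemma grid_term_pos j tr : 0 < grid_term j tr.
Proof. apply Rmult_lt_0_compat; apply exp_pos. Qed.

Lemma bad_event_le_grid_sum tr : length tr = (t - 1)%nat -> bad_event w i t tr <= grid_sum tr.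
Proof.
  intros Hlen.
  assert (Hsum0 : 0 <= grid_sum tr)
    by (apply Rsum_map_nonneg; intros j _; apply Rlt_le, grid_term_pos).
  destruct (Req_dec (bad_event w i t tr) 0) as [->|Hbad]; [exact Hsum0|].
  pose proof (distr_le_1 n w i w_distr i_lt_n) as Hwi.
  destruct (bad_event_deviation w i t tr Hwi t_ge_1 Hbad) as [Hdev _].
  fold a in Hdev.
  set (N := INR (Nw i tr)) in *. set (S := INR (hits i tr)) in *.
  assert (HsN : 0 <= sigma2 * N) by (apply Rmult_le_pos; [unfold sigma2; nra | apply pos_INR]).
  assert (Hdepth : (1 - d) ^ J * (1 - d) ^ J * (sigma2 * N) <= 2 * a).
  { assert (Hsig : sigma2 <= 1/4)
      by (unfold sigma2; pose proof (Rle_0_sqr (w i - 1/2)); unfold Rsqr in *; nra).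
    assert (HNt : N <= INR t) by (apply le_INR; pose proof (Nw_le_length i tr); lia).
    assert (0 <= (1 - d) ^ J * (1 - d) ^ J) by (apply Rmult_le_pos; apply pow_le; lra).
    assert (sigma2 * N <= 1/4 * INR t)
      by (apply Rmult_le_compat; [unfold sigma2; nra | apply pos_INR | exact Hsig | exact HNt]).
    assert ((1 - d) ^ J * (1 - d) ^ J * (sigma2 * N) <= (1 - d) ^ J * (1 - d) ^ J * (1/4 * INR t))
      by (apply Rmult_le_compat_l; assumption).
    unfold a. lra. }
  destruct (exists_grid_exponent_ge a (sigma2 * N) (S - w i * N) d J ltac:(unfold a; lra)
              HsN d_range Hdev Hdepth) as [j [Hj Hexp]].
  apply Rle_trans with (grid_term j tr).
  - apply Rle_trans with 1; [apply bad_event_le_1|].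
    unfold grid_term, exp_deviation. rewrite <- exp_plus. fold N S.
    apply Rle_trans with (1 + (- (a * (1 - d ^ 2)) +
      ((1 - d) ^ j * (S - w i * N) - sigma2 * cgf_bound ((1 - d) ^ j) * N)));
      [|apply exp_ineq1_le].
    lra.
  - apply (Rsum_map_term_le (fun j => grid_term j tr)).
    + intros k _. apply Rlt_le, grid_term_pos.
    + apply in_seq. lia.
Qed.

Lemma grid_sum_supermartingale tr s :
  Rsum (map (fun h => w h * grid_sum (tr ++ [(s, h)])) (seq 0 n)) <= grid_sum tr.
Proof.
  unfold grid_sum.
  rewrite (Rsum_map_ext _
    (fun h => Rsum (map (fun j => w h * grid_term j (tr ++ [(s, h)])) (seq 0 (S J)))))
    by (intros h _; rewrite <- Rsum_map_scal; reflexivity).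
  rewrite (Rsum_map_swap (fun h j => w h * grid_term j (tr ++ [(s, h)]))).
  apply Rsum_map_le. intros j _. unfold grid_term.
  rewrite (Rsum_map_ext _ (fun h => exp (- (a * (1 - d^2))) *
     (w h * exp_deviation w i ((1 - d) ^ j) (sigma2 * cgf_bound ((1 - d) ^ j)) (tr ++ [(s, h)]))))
    by (intros; ring).
  rewrite Rsum_map_scal. apply Rmult_le_compat_l; [apply Rlt_le, exp_pos|].
  apply (exp_deviation_supermartingale n); auto.
  apply bernoulli_mgf_le; [apply (distr_le_1 n w i w_distr i_lt_n)|].
  split; [apply pow_lt; lra|].
  apply Rle_trans with (1 ^ j); [apply pow_incr; lra | rewrite pow1; lra].
Qed.

Lemma expect_bad_event_le_grid :
  expect n pol w (t - 1) [] (bad_event w i t)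
  <= INR (S J) * exp (- (zeta * ln (INR t) * (1 - d^2))).
Proof.
  apply Rle_trans with (expect n pol w (t - 1) [] grid_sum).
  { apply (expect_le_compat n E); [exact pol_valid | exact (proj1 w_distr)|].
    intros tr Hlen. apply bad_event_le_grid_sum. exact Hlen. }
  apply Rle_trans with (grid_sum []).
  { apply (expect_le_of_supermartingale n E); [exact pol_valid | exact (proj1 w_distr)|].
    intros tr p s _. apply grid_sum_supermartingale. }
  unfold grid_sum, grid_term. rewrite (Rsum_map_ext _ (fun _ => exp (- (a * (1 - d^2))))).
  - rewrite Rsum_map_const, length_seq. right. reflexivity.
  - intros j _. rewrite exp_deviation_nil. ring.
Qed.

End GridUnionBound.

Lemma exp_le_exp x y : x <= y -> exp x <= exp y.
Proof. intros [Hlt|Heq]; [apply Rlt_le, exp_increasing, Hlt | rewrite Heq; apply Rle_refl]. Qed.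

Lemma exists_nat_between r : 0 <= r -> exists J : nat, r <= INR J <= r + 1.
Proof.
  intros Hr. destruct (archimed r) as [Hup1 Hup2].
  assert (Hz : (0 <= up r)%Z) by (apply le_IZR; lra).
  exists (Z.to_nat (up r)). rewrite INR_IZR_INZ, Z2Nat.id by exact Hz. lra.
Qed.

Lemma pow_le_exp_opp d J : 0 <= d <= 1 -> (1 - d) ^ J <= exp (- (d * INR J)).
Proof.
  intros Hd. induction J as [|J IH]; simpl pow.
  - rewrite Rmult_0_r, Ropp_0, exp_0. lra.
  - rewrite S_INR.
    replace (- (d * (INR J + 1))) with (- d + - (d * INR J)) by ring. rewrite exp_plus.
    pose proof (exp_ineq1_le (- d)).
    apply Rmult_le_compat; [lra | apply pow_le; lra | lra | exact IH].
Qed.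

Lemma grid_deep_of_depth t d J : (1 <= t)%nat -> 0 < d < 1 ->
  ln (INR t) / (2 * d) <= INR J -> (1 - d) ^ J * (1 - d) ^ J * INR t <= 1.
Proof.
  intros Ht Hd HJ.
  assert (Ht0 : 0 < INR t) by (apply lt_0_INR; lia).
  pose proof (pow_le_exp_opp d J ltac:(lra)) as Hpow.
  pose proof (pow_le (1 - d) J ltac:(lra)).
  apply Rle_trans with (exp (- (d * INR J)) * exp (- (d * INR J)) * exp (ln (INR t))).
  - rewrite exp_ln by exact Ht0.
    apply Rmult_le_compat_r; [lra|]. apply Rmult_le_compat; lra.
  - rewrite <- !exp_plus, <- exp_0. apply exp_le_exp.
    apply Rmult_le_compat_l with (r := 2 * d) in HJ; [|lra].
    replace (2 * d * (ln (INR t) / (2 * d))) with (ln (INR t)) in HJ by (field; lra).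
    lra.
Qed.

Lemma expect_bad_event_le n E pol w i t d :
  valid_policy n E pol -> is_distr n w -> (i < n)%nat -> (1 <= t)%nat ->
  1/8 <= zeta * ln (INR t) -> 0 < d < 1 ->
  expect n pol w (t - 1) [] (bad_event w i t)
  <= (ln (INR t) / (2 * d) + 2) * exp (- (zeta * ln (INR t) * (1 - d^2))).
Proof.
  intros Hpol Hw Hi Ht Ha Hd.
  assert (HL : 0 <= ln (INR t) / (2 * d)).
  { apply Rmult_le_pos; [|apply Rlt_le, Rinv_0_lt_compat; lra].
    rewrite <- ln_1. apply ln_le, (le_INR 1); [lra | lia]. }
  destruct (exists_nat_between _ HL) as [J HJ].
  pose proof (grid_deep_of_depth t d J Ht Hd (proj1 HJ)) as Hdeep.
  eapply Rle_trans; [exact (expect_bad_event_le_grid n E pol w i t Hpol Hw Hi Ht Ha d J Hd Hdeep)|].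
  rewrite S_INR. apply Rmult_le_compat_r; [apply Rlt_le, exp_pos | lra].
Qed.

Lemma beta_set_nonneg t x : (1 <= t)%nat -> beta_set t x -> 0 <= x.
Proof.
  intros Ht [al [Hal ->]].
  assert (HL : 0 <= ln (INR t)) by (rewrite <- ln_1; apply ln_le, (le_INR 1); [lra | lia]).
  assert (Hla : 0 < ln al) by (rewrite <- ln_1; apply ln_increasing; lra).
  apply Rmult_le_pos; [|apply Rlt_le, exp_pos].
  apply Rmin_glb; [|apply pos_INR].
  apply Rmult_le_pos; [lra | apply Rlt_le, Rinv_0_lt_compat, Hla].
Qed.

Lemma beta_is_glb t : (1 <= t)%nat -> is_glb (beta_set t) (beta t).
Proof.
  intros Ht. unfold beta. apply epsilon_spec.
  set (F := fun y => beta_set t (- y)).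
  assert (Hbound : bound F).
  { exists 0. intros y Hy. apply (beta_set_nonneg t) in Hy; [lra | exact Ht]. }
  assert (Hinh : exists y, F y).
  { exists (- (Rmin (ln (INR t) / ln 2) (INR t) * Rpower (INR t) (- zeta / 2))).
    unfold F. rewrite Ropp_involutive. exists 2. split; [lra | reflexivity]. }
  destruct (completeness F Hbound Hinh) as [m [Hub Hlub]].
  exists (- m). split.
  - intros x Hx. apply Ropp_le_cancel. rewrite Ropp_involutive. apply Hub.
    unfold F. rewrite Ropp_involutive. exact Hx.
  - intros c Hc. apply Ropp_le_cancel. rewrite Ropp_involutive. apply Hlub.
    intros y Hy. pose proof (Hc _ Hy). lra.
Qed.

Lemma beta_nonneg t : (1 <= t)%nat -> 0 <= beta t.
Proof. intros Ht. apply (beta_is_glb t Ht). intros x Hx. exact (beta_set_nonneg t x Ht Hx). Qed.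

Lemma grid_count_le_log_aux L r p : 3 <= L -> 1 < r -> r * r <= 3 -> 0 < p ->
  p * p = r * r - 1 -> L * r / (2 * p) + 2 <= L / (r - 1).
Proof.
  intros HL Hr Hr3 Hp Hpp.
  assert (Hrp : 3 * r * p <= 6 * r + 10 - 4 * (r * r)).
  { apply Rsqr_incr_0_var; [|nra]. unfold Rsqr.
    replace (3 * r * p * (3 * r * p)) with (9 * (r * r) * (p * p)) by ring. rewrite Hpp. nra. }
  assert (Hkey : L * r * p + 4 * (p * p) <= 2 * L * (r + 1)) by nra.
  assert (Hpp0 : 0 < p * p) by nra.
  apply Rmult_le_reg_r with (2 * p * (r * r - 1));
    [rewrite <- Hpp; apply Rmult_lt_0_compat; lra|].
  replace ((L * r / (2 * p) + 2) * (2 * p * (r * r - 1))) with ((L * r + 4 * p) * (p * p))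
    by (rewrite Hpp; field; lra).
  replace (L / (r - 1) * (2 * p * (r * r - 1))) with (p * (2 * L * (r + 1))) by (field; lra).
  replace ((L * r + 4 * p) * (p * p)) with (p * (L * r * p + 4 * (p * p))) by ring.
  apply Rmult_le_compat_l; lra.
Qed.

Lemma grid_count_le_log L al : 3 <= L -> 1 < al <= 3 ->
  L / (2 * sqrt (1 - / al)) + 2 <= 2 * (L / ln al).
Proof.
  intros HL Hal.
  set (r := sqrt al). set (p := sqrt (al - 1)).
  assert (Hr : r * r = al) by (apply sqrt_sqrt; lra).
  assert (Hp : p * p = al - 1) by (apply sqrt_sqrt; lra).
  assert (Hp0 : 0 < p) by (apply sqrt_lt_R0; lra).
  assert (Hr1 : 1 < r) by (assert (0 <= r) by apply sqrt_pos; nra).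
  assert (Hd : sqrt (1 - / al) = p / r).
  { apply sqrt_lem_1.
    - rewrite <- Hr. apply Rmult_le_reg_r with (r * r); [nra|].
      rewrite Rmult_minus_distr_r, Rinv_l, Rmult_0_l by nra. nra.
    - apply Rmult_le_pos; [lra | apply Rlt_le, Rinv_0_lt_compat; lra].
    - rewrite <- Hr. field_simplify; [|lra..]. replace (p ^ 2) with (r ^ 2 - 1) by (simpl; lra).
      reflexivity. }
  assert (Hln : ln al = 2 * ln r) by (rewrite <- Hr, ln_mult by lra; ring).
  assert (Hlr : ln r <= r - 1) by (pose proof (exp_ineq1_le (ln r)); rewrite exp_ln in *; lra).
  assert (Hlr0 : 0 < ln r) by (rewrite <- ln_1; apply ln_increasing; lra).
  rewrite Hd, Hln.
  replace (L / (2 * (p / r))) with (L * r / (2 * p)) by (field; lra).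
  apply Rle_trans with (L / (r - 1)); [apply grid_count_le_log_aux; nra|].
  replace (2 * (L / (2 * ln r))) with (L / ln r) by (field; lra).
  unfold Rdiv. apply Rmult_le_compat_l; [lra|]. apply Rinv_le_contravar; lra.
Qed.

Lemma grid_count_le_horizon L : 3 <= L ->
  (L / (2 * / sqrt (zeta * L)) + 2) * exp 1 <= 2 * exp L.
Proof.
  intros HL. unfold zeta.
  pose proof (sqrt_sqrt (6/5 * L) ltac:(lra)) as Hs.
  pose proof (sqrt_lt_R0 (6/5 * L) ltac:(lra)) as Hs0.
  set (s := sqrt (6/5 * L)) in *.
  replace (L / (2 * / s)) with (L * s / 2) by (field; lra).
  assert (Hs1 : s <= (6/5 * L + 1) / 2) by nra.
  pose proof (exp_ge_taylor L 3 ltac:(lra)) as Htaylor. simpl in Htaylor.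
  pose proof exp_le_3.
  apply Rle_trans with ((L * s / 2 + 2) * 3); [apply Rmult_le_compat_l; nra|].
  nra.
Qed.

Lemma ln_ge_3 t : (27 <= t)%nat -> 3 <= ln (INR t).
Proof.
  intros Ht. apply (le_INR 27) in Ht. simpl in Ht.
  assert (He3 : exp 3 <= 27).
  { replace 3 with (1 + 1 + 1) by ring. rewrite !exp_plus.
    pose proof exp_le_3. pose proof (exp_pos 1). nra. }
  rewrite <- (ln_exp 3). apply ln_le; [apply exp_pos | lra].
Qed.

Lemma horizon_le_log_scale t : (1 <= t <= 26)%nat -> INR t - 1 <= 133/10 * (zeta * ln (INR t)).
Proof.
  intros Ht. unfold zeta.
  assert (Ht1 : INR 1 <= INR t) by (apply le_INR; lia).
  assert (Ht26 : INR t <= INR 26) by (apply le_INR; lia).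
  simpl in Ht1, Ht26.
  set (s := sqrt (INR t)).
  assert (Hs : s * s = INR t) by (apply sqrt_sqrt; lra).
  assert (Hs0 : 0 < s) by (apply sqrt_lt_R0; lra).
  assert (Hln : ln (INR t) = 2 * ln s) by (rewrite <- Hs, ln_mult by exact Hs0; ring).
  assert (Hsln : s - 1 <= s * ln s).
  { pose proof (exp_ineq1_le (- ln s)) as Hexp.
    rewrite exp_Ropp, exp_ln in Hexp by exact Hs0.
    apply Rmult_le_compat_l with (r := s) in Hexp; [|lra].
    rewrite Rinv_r in Hexp by lra. lra. }
  assert (Hs1 : 1 <= s) by nra.
  rewrite Hln. apply Rmult_le_reg_l with s; [exact Hs0|].
  nra.
Qed.

Lemma expect_bad_event_small_horizon n E pol w i t :
  valid_policy n E pol -> is_distr n w -> (i < n)%nat -> (1 <= t)%nat -> (t < 27)%nat ->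
  expect n pol w (t - 1) [] (bad_event w i t) <= 0.
Proof.
  intros Hpol Hw Hi Ht Hsmall.
  apply Rle_trans with (expect n pol w (t - 1) [] (fun _ => 0)).
  - apply (expect_le_compat n E); [exact Hpol | exact (proj1 Hw)|]. intros tr Hlen.
    destruct (Req_dec (bad_event w i t tr) 0) as [->|Hbad]; [lra | exfalso].
    destruct (bad_event_deviation w i t tr (distr_le_1 n w i Hw Hi) Ht Hbad) as [_ HN].
    pose proof (horizon_le_log_scale t ltac:(lia)).
    assert (INR (Nw i tr) <= INR t - 1).
    { replace (INR t - 1) with (INR (t - 1)) by (rewrite minus_INR by lia; reflexivity).
      apply le_INR. pose proof (Nw_le_length i tr). simpl in Hlen. lia. }
    lra.
  - apply (expect_le_of_supermartingale n E); [exact Hpol | exact (proj1 Hw)|].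
    intros tr p s _. rewrite (Rsum_map_ext _ (fun _ => 0)) by (intros; ring).
    rewrite Rsum_map_const. lra.
Qed.

Lemma Rpower_opp_zeta_div t al : 0 < INR t -> 0 < al ->
  Rpower (INR t) (- zeta / al) = exp (- (zeta * ln (INR t) / al)).
Proof. intros Ht Hal. unfold Rpower. f_equal. field. lra. Qed.

Section LargeHorizon.
Variables (n : nat) (E : nat -> nat -> Prop) (pol : policy) (w : nat -> R) (i t : nat) (al : R).
Hypothesis pol_valid : valid_policy n E pol.
Hypothesis w_distr : is_distr n w.
Hypothesis i_lt_n : (i < n)%nat.
Hypothesis t_ge_1 : (1 <= t)%nat.
Hypothesis log_ge_3 : 3 <= ln (INR t).
Hypothesis al_range : 1 < al <= 3.

Lemma expect_bad_event_le_log_term :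
  / 2 * expect n pol w (t - 1) [] (bad_event w i t)
  <= ln (INR t) / ln al * Rpower (INR t) (- zeta / al).
Proof.
  set (L := ln (INR t)) in *.
  assert (Hinv : 1/3 <= / al < 1).
  { split; [replace (1/3) with (/3) by field; apply Rinv_le_contravar; lra|].
    rewrite <- Rinv_1. apply Rinv_lt_contravar; lra. }
  set (d := sqrt (1 - / al)).
  assert (Hdd : d * d = 1 - / al) by (apply sqrt_sqrt; lra).
  assert (Hd : 0 < d < 1) by (assert (0 < d) by (apply sqrt_lt_R0; lra); split; nra).
  pose proof (expect_bad_event_le n E pol w i t d pol_valid w_distr i_lt_n t_ge_1
                ltac:(unfold zeta; fold L; lra) Hd) as Hgrid.
  fold L in Hgrid.
  replace (zeta * L * (1 - d ^ 2)) with (zeta * L / al) in Hgrid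
    by (simpl; rewrite Rmult_1_r, Hdd; field; lra).
  rewrite Rpower_opp_zeta_div by (solve [apply lt_0_INR; lia | lra]). fold L.
  pose proof (grid_count_le_log L al log_ge_3 al_range) as Hcount. fold d in Hcount.
  pose proof (exp_pos (- (zeta * L / al))).
  nra.
Qed.

Lemma expect_bad_event_le_horizon_term :
  / 2 * expect n pol w (t - 1) [] (bad_event w i t)
  <= INR t * Rpower (INR t) (- zeta / al).
Proof.
  set (L := ln (INR t)) in *.
  assert (Ht0 : 0 < INR t) by (apply lt_0_INR; lia).
  set (a := zeta * L).
  assert (Ha : 36/10 <= a) by (unfold a, zeta; lra).
  assert (Hsa : sqrt a * sqrt a = a) by (apply sqrt_sqrt; lra).
  assert (Hsa1 : 1 < sqrt a) by (assert (0 <= sqrt a) by apply sqrt_pos; nra).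
  set (d := / sqrt a).
  assert (Hd : 0 < d < 1).
  { split; [apply Rinv_0_lt_compat; lra|]. rewrite <- Rinv_1. apply Rinv_lt_contravar; lra. }
  pose proof (expect_bad_event_le n E pol w i t d pol_valid w_distr i_lt_n t_ge_1
                ltac:(fold L a; lra) Hd) as Hgrid.
  fold L a in Hgrid.
  assert (Hdd : d * d = / a) by (unfold d; rewrite <- Rinv_mult, Hsa; reflexivity).
  replace (- (a * (1 - d ^ 2))) with (1 + - a) in Hgrid
    by (simpl; rewrite Rmult_1_r, Hdd; field; lra).
  rewrite exp_plus in Hgrid.
  pose proof (grid_count_le_horizon L log_ge_3) as Hcount. fold a d in Hcount.
  assert (HtL : exp L = INR t) by (apply exp_ln; exact Ht0).
  rewrite HtL in Hcount.
  assert (Hexp : exp (- a) <= exp (- (a / al))).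
  { apply exp_le_exp. apply Ropp_le_contravar.
    apply Rmult_le_reg_r with al; [lra|]. replace (a / al * al) with a by (field; lra). nra. }
  rewrite Rpower_opp_zeta_div by lra. fold L a.
  pose proof (exp_pos (- a)). pose proof (exp_pos 1).
  assert (0 <= L / (2 * d)) by (apply Rmult_le_pos; [lra | apply Rlt_le, Rinv_0_lt_compat; lra]).
  nra.
Qed.

End LargeHorizon.

Theorem mainTheorem7 :
  forall (n : nat) (E : nat -> nat -> Prop) (pol : policy) (w : nat -> R)
         (i t : nat),
    is_dag n E ->
    valid_policy n E pol ->
    is_distr n w ->
    (i < n)%nat ->
    (1 <= t)%nat ->
    expect n pol w (t - 1) nil (bad_event w i t) <= 2 * beta t.
Proof.
  intros n E pol w i t _ Hpol Hw Hi Ht.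
  destruct (le_lt_dec 27 t) as [Hlarge|Hsmall].
  - pose proof (ln_ge_3 t Hlarge) as HL.
    enough (/ 2 * expect n pol w (t - 1) [] (bad_event w i t) <= beta t) by lra.
    apply (beta_is_glb t Ht). intros x [al [Hal ->]].
    pattern (Rmin (ln (INR t) / ln al) (INR t)). apply Rmin_case.
    + exact (expect_bad_event_le_log_term n E pol w i t al Hpol Hw Hi Ht HL Hal).
    + exact (expect_bad_event_le_horizon_term n E pol w i t al Hpol Hw Hi Ht HL Hal).
  - pose proof (expect_bad_event_small_horizon n E pol w i t Hpol Hw Hi Ht Hsmall).
    pose proof (beta_nonneg t Ht). lra.
Qed.
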